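(* Let $n\geq 27$. If $\phi$ is a character of $\operatorname{Sym}(n)$ of degree less than $5\binom{n}{3}$ and $\chi^\lambda$ is an irreducible constituent of $\phi$, then $\lambda$ is one of $[n],[1^n],[n-1,1],[2,1^{n-2}],[n-2,2],[2^2,1^{n-4}],[n-2,1^2],[3,1^{n-3}],[n-3,3],[2^3,1^{n-6}],[n-3,1^3],[4,1^{n-4}],[n-3,2,1],[3,2,1^{n-5}]$.
   Context: For a partition $\lambda\vdash n$, $\chi^\lambda$ denotes the irreducible complex character of $\operatorname{Sym}(n)$ afforded by the Specht module $S^\lambda$. Exponents in partitions denote repeated parts, e.g. $[2^2,1^{n-4}]=[2,2,1,\ldots,1]$. *)

From HB Require Import structures.
From mathcomp Require Import all_boot all_order all_algebra all_fingroup all_solvable all_field all_character.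
Set Implicit Arguments. Unset Strict Implicit. Unset Printing Implicit Defensive.
Import Order.TTheory GRing.Theory Num.Theory.
Local Open Scope ring_scope.

Definition is_partition (n : nat) (l : seq nat) : bool :=
  [&& sorted geq l, 0%N \notin l & sumn l == n].

(* Canonical (row-by-row) position (row, column) of slot m in the Young
   diagram of l: slots 0 .. l_0 - 1 fill row 0, the next l_1 fill row 1, ... *)
Fixpoint cell_of (l : seq nat) (m : nat) : nat * nat :=
  match l with
  | [::] => (0%N, m)
  | a :: l' => if (m < a)%N then (0%N, m)
               else let rc := cell_of l' (m - a) in (rc.1.+1, rc.2)
  end.

(* Tabloids, encoded by their row assignment (entry x lies in row r x). *)
Definition tabloid (n : nat) := {ffun 'I_n -> 'I_n.+1}.
Definition dimM (n : nat) : nat := #|{: tabloid n}|.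

Definition tvec n (r : tabloid n) : 'rV[algC]_(dimM n) := delta_mx 0 (enum_rank r).

(* Action of g on tabloids: replace each entry x by g x. *)
Definition tact n (g : 'S_n) (r : tabloid n) : tabloid n :=
  [ffun y => r ((g^-1)%g y)].

(* Matrix (acting on row vectors) of v |-> g . v on M. *)
Definition tperm_mx n (g : 'S_n) : 'M[algC]_(dimM n) :=
  \matrix_(i, j) ((enum_val j == tact g (enum_val i))%:R).

(* The tableau t_s of shape l (s : 'S_n) has entry x in the cell cell_of l (s x).
   Its tabloid is determined by rows of entries. *)
Definition tab_of n (l : seq nat) (s : 'S_n) : tabloid n :=
  [ffun x => inord (cell_of l (s x)).1].

Definition colstab n (l : seq nat) (s : 'S_n) : pred 'S_n :=
  fun p => [forall x, (cell_of l (s (p x))).2 == (cell_of l (s x)).2].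

(* Polytabloid e_{t_s} = sum_{p in C_{t_s}} sgn(p) {p t_s};
   the tableau p t_s has entry p x where t_s has x, i.e. slot map (p^-1 * s). *)
Definition polytabloid n (l : seq nat) (s : 'S_n) : 'rV[algC]_(dimM n) :=
  \sum_(p : 'S_n | colstab l s p) ((-1) ^+ odd_perm p) *: tvec (tab_of l (p^-1 * s)%g).

Definition specht_span n (l : seq nat) : 'M[algC]_(#|{: 'S_n}|, dimM n) :=
  \matrix_(i < #|{: 'S_n}|) polytabloid l (enum_val i).

(* chi^l(g) = trace of the action of g on the (invariant) subspace S^l,
   computed in the basis row_base (specht_span l). *)
Definition specht_char n (l : seq nat) (g : 'S_n) : algC :=
  let B := row_base (specht_span n l) in
  \tr (B *m tperm_mx g *m pinvmx B).

Definition lemma3p2_list (n : nat) : seq (seq nat) :=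
  [:: [:: n]; nseq n 1%N;
      [:: n - 1; 1]%N; (2 :: nseq (n - 2) 1)%N;
      [:: n - 2; 2]%N; ([:: 2; 2] ++ nseq (n - 4) 1)%N;
      [:: n - 2; 1; 1]%N; (3 :: nseq (n - 3) 1)%N;
      [:: n - 3; 3]%N; ([:: 2; 2; 2] ++ nseq (n - 6) 1)%N;
      [:: n - 3; 1; 1; 1]%N; (4 :: nseq (n - 4) 1)%N;
      [:: n - 3; 2; 1]%N; ([:: 3; 2] ++ nseq (n - 5) 1)%N].

From Pilot Require Import Defs.
From HB Require Import structures.
From mathcomp Require Import all_boot all_order all_algebra all_fingroup all_solvable all_field all_character.
From mathcomp Require Import zify.
Import Order.TTheory GRing.Theory Num.Theory.
Set Implicit Arguments. Unset Strict Implicit. Unset Printing Implicit Defensive.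

(* The degree chi^l(1) is the rank of the span of the polytabloids e_t. The
   standard polytabloids, indexed here by Yamanouchi words, are linearly
   independent, since the tabloid {t} is the lexicographically least tabloid
   occurring in e_t; hence chi^l(1) >= f^l ([nsyt l]), the number of standard
   tableaux, which obeys the branching rule f^l = sum_c f^(l - c) over the
   corners c of l. Induction on n along this rule gives
   f^l >= C(n, k) - C(n, k - 1) whenever k <= 4 and both the first row and the
   first column of l have at most n - k cells; the base cases n = 15, 16 are
   checked exhaustively. A partition of n >= 27 outside the list has first row
   and first column of length at most n - 4, so
   chi^l(1) >= C(n, 4) - C(n, 3) >= 5 C(n, 3) > phi(1). *)

(** * Partitions and their corners *)

Lemma nth_leq_sumn s i : nth 0 s i <= sumn s.
Proof. by elim: s i => [|x s IH] [|i] //=; [lia | have := IH i; lia]. Qed.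

Lemma sumn_filter_neq0 s : sumn [seq x <- s | x != 0] = sumn s.
Proof. by elim: s => //= x s IH; case: eqP => [->|_] /=; rewrite IH. Qed.

Lemma leq_sumn_map_mem (T : eqType) (f : T -> nat) s i :
  i \in s -> f i <= sumn (map f s).
Proof. by elim: s => //= x s IH; rewrite in_cons => /orP [/eqP ->|/IH]; lia. Qed.

Lemma leq_sumn_map_mem2 (T : eqType) (f : T -> nat) s i j :
  i \in s -> j \in s -> i != j -> f i + f j <= sumn (map f s).
Proof.
elim: s => //= x s IH; rewrite !in_cons.
case: (eqVneq i x) => [->|ix] /=.
  move=> _ js; rewrite eq_sym => /negbTE nx; rewrite nx /= in js.
  by have := leq_sumn_map_mem f js; lia.
case: (eqVneq j x) => [->|jx] /= iS.
  by move=> _ _; have := leq_sumn_map_mem f iS; lia.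
by move=> js ne; have := IH iS js ne; lia.
Qed.

Lemma leq_mul_size_sumn c s : all (leq c) s -> c * size s <= sumn s.
Proof. by elim: s => [|x s IH] /=; [rewrite muln0 | case/andP => h /IH; lia]. Qed.

Lemma leq_sumn_mul_size c s : all (geq c) s -> sumn s <= c * size s.
Proof. by elim: s => [|x s IH] /=; [rewrite muln0 | case/andP => h /IH; lia]. Qed.

Definition is_part (l : seq nat) : bool := sorted geq l && (0 \notin l).

Lemma is_partP l : reflect
  ((forall t, t.+1 < size l -> nth 0 l t.+1 <= nth 0 l t) /\
   (forall t, t < size l -> 0 < nth 0 l t)) (is_part l).
Proof.
apply: (iffP andP) => [[/(sortedP 0) H1 H2]|[H1 H2]]; split.
- by move=> t /H1.
- move=> t lt; rewrite lt0n; apply: contra H2 => /eqP <-; exact: mem_nth.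
- by apply/(sortedP 0) => t /H1.
- by apply/negP => /(nthP 0) [t lt e]; move: (H2 t lt); rewrite e.
Qed.

Lemma part_nth_gt0 l t : is_part l -> t < size l -> 0 < nth 0 l t.
Proof. by move=> /is_partP [_]; apply. Qed.

Lemma part_nth_le l t u : is_part l -> t <= u -> nth 0 l u <= nth 0 l t.
Proof.
move=> /is_partP [H1 H2]; elim: u => [|u IH]; first by rewrite leqn0 => /eqP ->.
rewrite leq_eqVlt => /orP [/eqP -> //|]; rewrite ltnS => /IH.
case: (ltnP u.+1 (size l)) => [/H1 h|h]; first by move/(leq_trans h).
by rewrite (nth_default 0 h).
Qed.

Lemma is_part_behead a l : is_part (a :: l) -> is_part l.
Proof.
by rewrite /is_part /= in_cons negb_or => /andP [/path_sorted -> /andP [_ ->]].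
Qed.

Lemma part_size_le_sumn l : is_part l -> size l <= sumn l.
Proof.
move=> pl; rewrite -[size l]mul1n leq_mul_size_sumn //.
by apply/allP => x /(nthP 0) [t ts <-]; exact: part_nth_gt0.
Qed.

Lemma part_sumn_le_head l : is_part l -> sumn l <= nth 0 l 0 * size l.
Proof.
by move=> pl; apply/leq_sumn_mul_size/allP => x /(nthP 0) [t _ <-]; exact: part_nth_le.
Qed.

Lemma part_last_mul_size_le l : is_part l -> nth 0 l (size l).-1 * size l <= sumn l.
Proof.
move=> pl; apply/leq_mul_size_sumn/allP => x /(nthP 0) [t ts <-].
by apply: (part_nth_le pl); rewrite -ltnS (ltn_predK ts).
Qed.

Lemma part_head_size_le l : is_part l -> nth 0 l 0 + (size l).-1 <= sumn l.
Proof. by case: l => //= a l /is_part_behead /part_size_le_sumn; lia. Qed.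

Lemma head_add_second_le_sumn l : nth 0 l 0 + nth 0 l 1 <= sumn l.
Proof. by case: l => [|a [|b l]] /=; lia. Qed.

Definition corner (l : seq nat) (i : nat) : bool :=
  (i < size l) && (nth 0 l i.+1 < nth 0 l i).

Definition corners (l : seq nat) : seq nat := [seq i <- iota 0 (size l) | corner l i].

Lemma mem_corners l i : (i \in corners l) = corner l i.
Proof.
rewrite mem_filter mem_iota /corner /=; case: (i < size l); by rewrite ?andbF ?andbT.
Qed.

Lemma last_corner l : is_part l -> l != [::] -> corner l (size l).-1.
Proof.
move=> pl nl; have sl : 0 < size l by case: (l) nl.
rewrite /corner nth_default; last lia.
by rewrite part_nth_gt0 //; lia.
Qed.

Definition rem_corner (l : seq nat) (i : nat) : seq nat :=
  [seq x <- set_nth 0 l i (nth 0 l i).-1 | x != 0].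

Section RemCorner.
Variables (l : seq nat) (i : nat).
Hypotheses (pl : is_part l) (ci : corner l i).

Let il : i < size l. Proof. by case/andP: ci. Qed.

Lemma rem_cornerE :
  (1 < nth 0 l i /\ rem_corner l i = set_nth 0 l i (nth 0 l i).-1) \/
  (nth 0 l i = 1 /\ i.+1 = size l /\ rem_corner l i = take i l).
Proof.
have li := part_nth_gt0 pl il.
case: (ltnP 1 (nth 0 l i)) => h.
  left; split => //; apply/all_filterP/allP => x /(nthP 0) [t].
  rewrite size_set_nth nth_set_nth /= => tl <-.
  case: (eqVneq t i) => [_|ne]; rewrite -lt0n; first lia.
  by apply: part_nth_gt0 => //; move: tl il; rewrite /maxn; case: (ltnP i.+1 (size l)); lia.
right; have {}li : nth 0 l i = 1 by lia.
have si : i.+1 = size l.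
  apply/eqP; rewrite eqn_leq il leqNgt; apply/negP => /(part_nth_gt0 pl).
  by case/andP: ci; rewrite li; lia.
split=> //; split=> //.
rewrite /rem_corner li set_nthE il (_ : drop i.+1 l = [::]) ?si ?drop_size //.
rewrite filter_cat /= cats0; apply/all_filterP/allP => x /(nthP 0) [t].
by rewrite size_take il => ti <-; rewrite nth_take // -lt0n part_nth_gt0 //; lia.
Qed.

Lemma nth_rem_corner t : nth 0 (rem_corner l i) t = nth 0 l t - (t == i).
Proof.
case: rem_cornerE => [[h ->]|[h [si ->]]].
  by rewrite nth_set_nth /=; case: eqP => [->|]; rewrite ?subn0 //; lia.
case: (ltnP t i) => ti; first by rewrite nth_take // (_ : (t == i) = false) ?subn0 //; lia.
rewrite nth_default ?size_take; last by move: si; case: ltnP; lia.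
case: (eqVneq t i) => [->|ne]; first by rewrite h.
by rewrite nth_default //; lia.
Qed.

Lemma head_rem_corner : nth 0 (rem_corner l i) 0 = nth 0 l 0 - (i == 0).
Proof. by rewrite nth_rem_corner eq_sym. Qed.

Lemma size_rem_corner_le : size (rem_corner l i) <= size l.
Proof.
case: rem_cornerE => [[_ ->]|[_ [_ ->]]]; last by rewrite size_take; case: ltnP; lia.
by rewrite size_set_nth /maxn; case: ltnP; lia.
Qed.

Lemma size_rem_corner1 : nth 0 l i = 1 -> size (rem_corner l i) = (size l).-1.
Proof.
case: rem_cornerE => [[h _]|[_ [si ->]]]; first lia.
by rewrite size_take -si; case: ltnP; lia.
Qed.

Lemma rem_corner_part : is_part (rem_corner l i).
Proof.
apply/is_partP; split=> [t ts|t ts].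
  rewrite !nth_rem_corner; have := part_nth_le pl (leqnSn t); case/andP: ci => _.
  case: (eqVneq t i) => [->|ne]; first by rewrite (_ : (i.+1 == i) = false); lia.
  by case: eqP => _; lia.
rewrite lt0n; apply/eqP => e.
by have := mem_nth 0 ts; rewrite e mem_filter.
Qed.

Lemma sumn_rem_corner : sumn (rem_corner l i) = (sumn l).-1.
Proof.
rewrite /rem_corner sumn_filter_neq0 sumn_set_nth_ltn //.
by have := part_nth_gt0 pl il; have := nth_leq_sumn l i; lia.
Qed.

End RemCorner.

Fixpoint nsyt_fuel (m : nat) (l : seq nat) : nat :=
  if m is m'.+1 then
    if l is [::] then 1 else sumn [seq nsyt_fuel m' (rem_corner l i) | i <- corners l]
  else 1.

Definition nsyt (l : seq nat) : nat := nsyt_fuel (sumn l) l.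

Lemma nsyt_branch l : is_part l -> l != [::] ->
  nsyt l = sumn [seq nsyt (rem_corner l i) | i <- corners l].
Proof.
case: l => // a l pl _; rewrite /nsyt.
have := part_nth_gt0 pl (ltn0Sn _); rewrite /=.
case e: (a + sumn l) => [|m] ?; first lia.
congr sumn; apply/eq_in_map => i; rewrite mem_corners => ci.
by rewrite sumn_rem_corner //= e.
Qed.

Lemma nsyt_gt0 l : is_part l -> 0 < nsyt l.
Proof.
move e : (sumn l) => m; elim: m l e => [|m IH] l e pl; first by rewrite /nsyt e.
have nl : l != [::] by case: (l) e.
have cl := last_corner pl nl.
rewrite nsyt_branch //; apply: leq_trans (leq_sumn_map_mem _ _); last first.
  by rewrite mem_corners; exact: cl.
by apply: IH; [rewrite sumn_rem_corner // e | exact: rem_corner_part].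
Qed.

Lemma nsyt_ge_rem_corner l i : is_part l -> corner l i -> nsyt (rem_corner l i) <= nsyt l.
Proof.
move=> pl ci; rewrite (nsyt_branch pl); last by case: (l) ci.
by apply: leq_sumn_map_mem; rewrite mem_corners.
Qed.

Lemma nsyt_ge_rem_corner2 l i j : is_part l -> corner l i -> corner l j -> i != j ->
  nsyt (rem_corner l i) + nsyt (rem_corner l j) <= nsyt l.
Proof.
move=> pl ci cj ij; rewrite (nsyt_branch pl); last by case: (l) ci.
by apply: leq_sumn_map_mem2; rewrite ?mem_corners.
Qed.

(** * A lower bound for the number of standard tableaux *)

Definition bin_pred (n k : nat) : nat := if k is k'.+1 then 'C(n, k') else 0.

Lemma binS_bin_pred n k : 'C(n.+1, k) = 'C(n, k) + bin_pred n k.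
Proof. by case: k => [|k] /=; rewrite ?bin0 ?addn0 ?binS. Qed.

Definition nsyt_bound (n k : nat) : Prop :=
  forall l, is_part l -> sumn l = n -> nth 0 l 0 + k <= n -> size l + k <= n ->
  'C(n, k) <= nsyt l + bin_pred n k.

Fixpoint capped_sum (f : seq nat -> nat -> nat) (cs : seq (seq nat)) (t : nat) : nat :=
  if cs is c :: cs' then
    let v := f c t in if t <= v then t else v + capped_sum f cs' (t - v)
  else 0.

(* Stops counting once [t] is reached (see [nsyt_cappedE]); this is what makes
   the exhaustive checks of the base cases feasible. *)
Fixpoint nsyt_capped (m : nat) (l : seq nat) (t : nat) : nat :=
  if m is m'.+1 then
    if l is [::] then minn t 1
    else capped_sum (nsyt_capped m') [seq rem_corner l i | i <- corners l] t
  else minn t 1.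

Lemma capped_sumE f g cs t : (forall c t, f c t = minn t (g c)) ->
  capped_sum f cs t = minn t (sumn (map g cs)).
Proof.
move=> fE; elim: cs t => [|c cs IH] t /=; first lia.
by rewrite fE IH; case: (leqP t (minn t (g c))); lia.
Qed.

Lemma nsyt_cappedE m l t : nsyt_capped m l t = minn t (nsyt_fuel m l).
Proof.
elim: m l t => [|m IH] [|a l] t //=.
by rewrite (capped_sumE _ _ IH) -map_comp.
Qed.

Fixpoint parts_bounded (fuel n m : nat) : seq (seq nat) :=
  if n is 0 then [:: [::]] else
  if fuel is fuel'.+1 then
    [seq a :: p | a <- iota 1 (minn n m), p <- parts_bounded fuel' (n - a) a]
  else [::].

Lemma mem_parts_bounded fuel l m : is_part l -> sumn l <= fuel -> nth 0 l 0 <= m ->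
  l \in parts_bounded fuel (sumn l) m.
Proof.
elim: fuel l m => [|fuel IH] [|a l] m //= pal; have := part_nth_gt0 pal (ltn0Sn _).
  by rewrite /=; lia.
rewrite /= => a0 sf am; case e : (a + sumn l) => [|n]; first lia.
rewrite -e; apply: (@allpairs_f_dep _ _ _ (fun a p => a :: p)); first by rewrite mem_iota; lia.
rewrite (_ : a + sumn l - a = sumn l); last lia.
apply: IH; [exact: is_part_behead pal | lia |].
by case: l pal {e sf} => [//|b l] pal; exact: (part_nth_le pal (leq0n 1)).
Qed.

Definition nsyt_bound_check (n : nat) : bool :=
  all (fun l => all (fun k => (nth 0 l 0 + k <= n) ==> (size l + k <= n) ==>
                  ('C(n, k) <= nsyt_capped n l 'C(n, k) + bin_pred n k))
                (iota 0 5))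
      (parts_bounded n n n).

Lemma nsyt_bound_check15 : nsyt_bound_check 15. Proof. by vm_compute. Qed.
Lemma nsyt_bound_check16 : nsyt_bound_check 16. Proof. by vm_compute. Qed.

Lemma nsyt_bound_checkP n k : nsyt_bound_check n -> k <= 4 -> nsyt_bound n k.
Proof.
move=> /allP chk k4 l pl sl ha hs; subst n.
have /allP /(_ k) := chk l (mem_parts_bounded pl (leqnn _) (nth_leq_sumn _ _)).
by rewrite mem_iota ha hs nsyt_cappedE /nsyt => /(_ (ltac:(lia))) /=; lia.
Qed.

Lemma bin_closed_forms n :
  [/\ 2 * 'C(n.+1, 2) = n.+1 * n, 6 * 'C(n.+2, 3) = n.+2 * n.+1 * n
    & 24 * 'C(n.+3, 4) = n.+3 * n.+2 * n.+1 * n].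
Proof. by split; rewrite mulnC bin_ffact !ffactnS ffactn0 /= muln1 ?mulnA. Qed.

Lemma bin_convex_small n k : 16 <= n -> 0 < k <= 4 ->
  2 * 'C(n, k.-1) <= 'C(n, k) + bin_pred n k.-1.
Proof.
move=> n16 /andP [k1 k4]; rewrite -(subnKC n16); move: (n - 16) => p.
have [c2 _ _] := bin_closed_forms (15 + p).
have [_ c3 _] := bin_closed_forms (14 + p).
have [_ _ c4] := bin_closed_forms (13 + p).
by case: k k1 k4 => [|[|[|[|[|k]]]]] //= _ _;
  rewrite ?bin0 ?bin1 -?addSn in c2 c3 c4 *; lia.
Qed.

Lemma bin_rectangle_small n k : 16 <= n -> 0 < k <= 4 ->
  'C(n, k) + 2 * 'C(n.-1, k.-1) <= 2 * 'C(n.-1, k) + bin_pred n k.-1.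
Proof.
move=> n16 /andP [k1 k4]; rewrite -(subnKC n16); move: (n - 16) => p.
rewrite (_ : (16 + p).-1 = 15 + p) //.
have [a2 _ _] := bin_closed_forms (15 + p).
have [b2 a3 _] := bin_closed_forms (14 + p).
have [_ b3 a4] := bin_closed_forms (13 + p).
have [_ _ b4] := bin_closed_forms (12 + p).
by case: k k1 k4 => [|[|[|[|[|k]]]]] //= _ _;
  rewrite ?bin0 ?bin1 -?addSn in a2 a3 a4 b2 b3 b4 *; lia.
Qed.

Lemma nsyt_bound0 n : nsyt_bound n 0.
Proof. by move=> l pl _ _ _; rewrite bin0 addn0 nsyt_gt0. Qed.

Lemma nsyt_bound_rem_corner n k l i : nsyt_bound n k -> is_part l -> sumn l = n.+1 ->
  corner l i -> nth 0 l 0 - (i == 0) + k <= n -> size (rem_corner l i) + k <= n ->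
  'C(n, k) <= nsyt (rem_corner l i) + bin_pred n k.
Proof.
move=> Pnk pl sl ci ha hs.
by apply: Pnk; rewrite ?head_rem_corner ?sumn_rem_corner ?sl //; exact: rem_corner_part.
Qed.

Lemma inner_corner_or_rectangle l : is_part l ->
  (exists2 i, i < (size l).-1 & corner l i) \/
  (forall t, t < size l -> nth 0 l t = nth 0 l 0).
Proof.
move=> pl; case: (boolP (has (corner l) (iota 0 (size l).-1))).
  by move=> /hasP [i]; rewrite mem_iota /= => ij ci; left; exists i.
move=> /hasPn nc; right; elim=> [//|t IH] ts.
have := nc t; rewrite mem_iota /= /corner (_ : t < size l); last lia.
move=> /(_ (ltac:(lia))); rewrite -leqNgt => h; rewrite -IH; last lia.
by apply/eqP; rewrite eqn_leq h part_nth_le.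
Qed.

Section BoundStep.
Variables (n k : nat).
Hypotheses (n16 : 16 <= n) (k_gt0 : 0 < k) (k_le4 : k <= 4).
Hypotheses (Pnk : nsyt_bound n k) (Pnk1 : nsyt_bound n k.-1) (Pn1k : nsyt_bound n.-1 k).

Section Shape.
Variable l : seq nat.
Hypotheses (pl : is_part l) (sl : sumn l = n.+1).

Let nl : l != [::]. Proof. by case: (l) sl. Qed.
Let size_gt0 : 0 < size l. Proof. by case: (l) nl. Qed.
Let cj : corner l (size l).-1. Proof. exact: last_corner. Qed.
Let sumn_le := part_sumn_le_head pl.

Lemma nsyt_step_long_row : nth 0 l 0 + k = n.+1 -> 'C(n, k) <= nsyt l + bin_pred n k.-1.
Proof.
move=> ha; have := part_head_size_le pl; rewrite sl => hsz.
have s2 : 1 < size l.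
  rewrite ltnNge; apply/negP => s1; move: sumn_le.
  by rewrite sl (_ : size l = 1) ?muln1; lia.
have c0 : corner l 0.
  by rewrite /corner size_gt0; have := head_add_second_le_sumn l; lia.
have j0 : (size l).-1 != 0 by lia.
have := nsyt_bound_rem_corner Pnk pl sl c0; rewrite eqxx => /(_ (ltac:(lia))).
have := size_rem_corner_le pl c0 => s0 /(_ (ltac:(lia))) H0.
have := nsyt_bound_rem_corner Pnk1 pl sl cj; rewrite (negbTE j0) => /(_ (ltac:(lia))).
have := size_rem_corner_le pl cj => sj /(_ (ltac:(lia))) Hj.
have := nsyt_ge_rem_corner2 pl cj c0 j0; rewrite -(prednK k_gt0) /= in Hj H0 *; lia.
Qed.

Lemma nsyt_step_long_col : size l + k = n.+1 -> 'C(n, k) <= nsyt l + bin_pred n k.-1.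
Proof.
move=> hs; have := part_head_size_le pl; rewrite sl => hsz.
set j := (size l).-1.
have lj1 : nth 0 l j = 1.
  have := part_nth_gt0 pl (_ : j < size l) => /(_ (ltac:(lia))) lj.
  have := part_last_mul_size_le pl; rewrite sl -/j.
  by case: (leqP (nth 0 l j) 1) => h; [lia | nia].
have j0 : j != 0 by lia.
have := nsyt_bound_rem_corner Pnk pl sl cj; rewrite (negbTE j0) size_rem_corner1 //.
move=> /(_ (ltac:(lia)) (ltac:(lia))) Hj.
have [[i ij ci]|rect] := inner_corner_or_rectangle pl; last first.
  by have := rect j (ltac:(lia)); rewrite lj1; lia.
have := nsyt_bound_rem_corner Pnk1 pl sl ci (ltac:(lia)).
have := size_rem_corner_le pl ci => si /(_ (ltac:(lia))) Hi.
have ji : j != i by lia.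
have := nsyt_ge_rem_corner2 pl cj ci ji; rewrite -(prednK k_gt0) /= in Hj Hi *; lia.
Qed.

Lemma nsyt_step_inner_corner i : i < (size l).-1 -> corner l i ->
  nth 0 l 0 + k <= n -> size l + k <= n -> 'C(n, k) <= nsyt l + bin_pred n k.-1.
Proof.
move=> ij ci ha hs.
have si := size_rem_corner_le pl ci; have sj := size_rem_corner_le pl cj.
have Hi := nsyt_bound_rem_corner Pnk pl sl ci (ltac:(lia)) (ltac:(lia)).
have Hj := nsyt_bound_rem_corner Pnk pl sl cj (ltac:(lia)) (ltac:(lia)).
have ji : (size l).-1 != i by lia.
have := bin_convex_small (k := k) n16 (ltac:(lia)).
have := nsyt_ge_rem_corner2 pl cj ci ji; rewrite -(prednK k_gt0) /= in Hj Hi *; lia.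
Qed.

Lemma nsyt_step_rectangle : (forall t, t < size l -> nth 0 l t = nth 0 l 0) ->
  nth 0 l 0 + k <= n -> size l + k <= n -> 'C(n, k) <= nsyt l + bin_pred n k.-1.
Proof.
move=> rect ha hs; set a := nth 0 l 0 in rect ha *; set j := (size l).-1.
have lja : nth 0 l j = a by apply: rect; lia.
have sab : a * size l = n.+1.
  by have := part_last_mul_size_le pl; rewrite -/j lja sl; lia.
have a2 : 1 < a by rewrite ltnNge; apply/negP => a1; move: sab; nia.
have b2 : 1 < size l by rewrite ltnNge; apply/negP => b1; move: sab; nia.
have ab1 : 2 * a <= a * size l by rewrite mulnC leq_mul2l; lia.
have ab2 : 2 * size l <= a * size l by rewrite leq_mul2r; lia.
set m := rem_corner l j.
have pm : is_part m := rem_corner_part pl cj.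
have sm : sumn m = n.-1.+1 by rewrite sumn_rem_corner // sl; lia.
have mE t : nth 0 m t = nth 0 l t - (t == j) := nth_rem_corner pl cj t.
have mj : nth 0 m j = a - 1 by rewrite mE eqxx lja.
have jm : j < size m.
  by rewrite ltnNge; apply/negP => /(nth_default 0); rewrite mj; lia.
have cm1 : corner m j.
  by rewrite /corner jm mj mE nth_default /j; lia.
have cm2 : corner m j.-1.
  rewrite /corner (_ : j.-1.+1 = j) /j; last lia.
  by rewrite mj mE rect; lia.
have hm : nth 0 m 0 <= a by rewrite mE; lia.
have sm_le : size m <= size l := size_rem_corner_le pl cj.
have s1 := size_rem_corner_le pm cm1; have s2 := size_rem_corner_le pm cm2.
have H1 := nsyt_bound_rem_corner Pn1k pm sm cm1 (ltac:(lia)) (ltac:(lia)).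
have H2 := nsyt_bound_rem_corner Pn1k pm sm cm2 (ltac:(lia)) (ltac:(lia)).
have Fm : nsyt m <= nsyt l := nsyt_ge_rem_corner pl cj.
have := nsyt_ge_rem_corner2 pm cm1 cm2 (ltac:(lia)).
have := bin_rectangle_small (k := k) n16 (ltac:(lia)); rewrite -(prednK k_gt0) /= in H1 H2 *; lia.
Qed.

End Shape.

Lemma nsyt_bound_step : nsyt_bound n.+1 k.
Proof.
move=> l pl sl ha hs.
suff red : 'C(n, k) <= nsyt l + bin_pred n k.-1.
  by move: red; rewrite -(prednK k_gt0) /= !binS_bin_pred /=; lia.
case: (eqVneq (nth 0 l 0 + k) n.+1) => [|na]; first exact: nsyt_step_long_row.
case: (eqVneq (size l + k) n.+1) => [|nb]; first exact: nsyt_step_long_col.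
have [[i ij ci]|rect] := inner_corner_or_rectangle pl.
  by apply: (nsyt_step_inner_corner pl sl ij ci); lia.
by apply: nsyt_step_rectangle => //; lia.
Qed.

End BoundStep.

Lemma nsyt_bound_ge15 n k : 15 <= n -> k <= 4 -> nsyt_bound n k.
Proof.
elim: n {-2}n (leqnn n) k => [|N IH] n nN k n15 k4; first lia.
case: (ltnP n 17) => n17.
  case: (eqVneq n 15) => [->|n15']; first exact: nsyt_bound_checkP nsyt_bound_check15 k4.
  by rewrite (_ : n = 16); [exact: nsyt_bound_checkP nsyt_bound_check16 k4 | lia].
case: n nN n15 n17 => [//|n] nN _ n17.
case: k k4 => [|k] k4; first exact: nsyt_bound0.
by apply: nsyt_bound_step => //; apply: IH; lia.
Qed.

(** * Partitions outside the list *)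

Lemma mem_list_long_row n l : 27 <= n -> is_part l -> sumn l = n -> n < nth 0 l 0 + 4 ->
  l \in lemma3p2_list n.
Proof.
case: l => [|a r] n27 pl /= sl ha; first lia.
have pr := is_part_behead pl.
have r3 : nth 0 r 0 <= 3 by have := nth_leq_sumn r 0; lia.
have := mem_parts_bounded pr (leqnn _) r3.
rewrite (_ : a = n - sumn r); last lia.
have : sumn r <= 3 by lia.
case: (sumn r) => [|[|[|[|s]]]] //= _; rewrite !inE ?subn0.
all: by repeat case/orP; move/eqP=> ->; rewrite eqxx ?orbT.
Qed.

Lemma part_split_ones l : is_part l -> exists t, l = [seq x <- l | 1 < x] ++ nseq t 1.
Proof.
elim: l => [|x l IH] pl; first by exists 0.
have x1 : 0 < x := part_nth_gt0 pl (ltn0Sn (size l)).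
case: (ltnP 1 x) => h.
  by have [t {1}->] := IH (is_part_behead pl); exists t; rewrite /= h.
have -> : x = 1 by lia.
have /all_pred1P lE : all (pred1 1) l.
  apply/allP => y /(nthP 0) [t ts <-] /=.
  have := part_nth_le pl (leq0n t.+1); have := part_nth_gt0 pl (_ : t.+1 < size (x :: l)).
  by rewrite /= ltnS => /(_ ts) /=; lia.
exists (size l).+1; rewrite /= {1 2}lE.
by rewrite (_ : [seq x <- nseq (size l) 1 | 1 < x] = [::]) //; elim: (size l).
Qed.

Lemma mem_list_many_parts n l : 27 <= n -> is_part l -> sumn l = n -> n < size l + 4 ->
  l \in lemma3p2_list n.
Proof.
move=> n27 pl sl hs; have [t lE] := part_split_ones pl.
set p := [seq x <- l | 1 < x] in lE.
have pp : is_part p.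
  case/andP: pl => srt z0; apply/andP; split.
    by apply: sorted_filter srt => y x z h1 h2; exact: leq_trans h2 h1.
  by rewrite mem_filter negb_and z0 orbT.
have p2 : all (leq 2) p by apply/allP => x; rewrite mem_filter => /andP [].
have := leq_mul_size_sumn p2.
move: sl hs; rewrite lE sumn_cat size_cat sumn_nseq size_nseq mul1n => sl hs sp.
rewrite (_ : t = n - sumn p); last lia.
have hp : sumn p <= size p + 3 by lia.
have p6 : sumn p <= 6 by lia.
have := mem_parts_bounded pp (leqnn _) (leq_trans (nth_leq_sumn p 0) p6).
clearbody p; move: p2 hp p6; case: (sumn p) => [|[|[|[|[|[|[|s]]]]]]] //= p2 hp _.
all: rewrite !inE ?subn0; repeat case/orP; move/eqP=> pE; move: p2 hp; rewrite pE //=.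
all: by rewrite eqxx ?orbT.
Qed.

(* [4 * 'C(n, 4) = (n - 3) * 'C(n, 3)], so [f^l >= 'C(n, 4) - 'C(n, 3)] exceeds
   [5 * 'C(n, 3)] exactly when [n >= 27]. *)
Lemma nsyt_ge_5bin3 n l : 27 <= n -> is_part l -> sumn l = n ->
  l \notin lemma3p2_list n -> 5 * 'C(n, 3) <= nsyt l.
Proof.
move=> n27 pl sl nl; have n15 : 15 <= n by lia.
have ha : nth 0 l 0 + 4 <= n.
  by rewrite leqNgt; apply: contra nl; exact: mem_list_long_row.
have hs : size l + 4 <= n.
  by rewrite leqNgt; apply: contra nl; exact: mem_list_many_parts.
have /= := nsyt_bound_ge15 n15 (leqnn 4) pl sl ha hs.
have := mul_bin_left n 3.
have : 24 * 'C(n, 3) <= (n - 3) * 'C(n, 3) by rewrite leq_mul2r; lia.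
lia.
Qed.

(** * Standard polytabloids *)

Lemma count_take_leq (T : eqType) (a : pred T) (s : seq T) k k' : k <= k' ->
  count a (take k s) <= count a (take k' s).
Proof. by move=> kk; rewrite -(cat_take_drop k (take k' s)) take_takel // count_cat leq_addr. Qed.

(* [w] lists, for the entries [0, 1, ..., n - 1] in turn, the row they occupy
   in a standard tableau of shape [l]. *)
Definition yamanouchi (n : nat) (l w : seq nat) : Prop :=
  [/\ size w = n, forall v, count_mem v w = nth 0 l v &
      forall k u v, u <= v -> count_mem v (take k w) <= count_mem u (take k w)].

Fixpoint yam_words (m : nat) (l : seq nat) : seq (seq nat) :=
  if m is m'.+1 then
    if l is [::] then [:: [::]]
    else [seq rcons w i | i <- corners l, w <- yam_words m' (rem_corner l i)]
  else [:: [::]].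

Lemma size_yam_words m l : size (yam_words m l) = nsyt_fuel m l.
Proof.
elim: m l => [|m IH] [|a l] //=; rewrite size_allpairs_dep.
by congr sumn; apply: eq_map => i; rewrite IH.
Qed.

Lemma yam_wordsP m l : is_part l -> sumn l = m ->
  {in yam_words m l, forall w, yamanouchi m l w}.
Proof.
elim: m l => [|m IH] l pl sl w /=.
  have -> : l = [::].
    by case: l pl sl => // a l pl /=; have := part_nth_gt0 pl (ltn0Sn _); rewrite /=; lia.
  by rewrite inE => /eqP ->; split => // v; rewrite nth_nil.
case: l pl sl => [//|a l'] pl sl; set l := a :: l' in pl sl *.
case/allpairsPdep => i [w' [ci w'W ->]]; rewrite mem_corners in ci.
have sl' : sumn (rem_corner l i) = m by rewrite sumn_rem_corner // sl.
have [h1 h2 h3] := IH _ (rem_corner_part pl ci) sl' w' w'W.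
have li : 0 < nth 0 l i by case/andP: ci => il _; exact: part_nth_gt0.
split.
- by rewrite size_rcons h1.
- move=> v; rewrite -cats1 count_cat /= h2 nth_rem_corner // eq_sym.
  by case: (eqVneq i v) => [<-|ne] /=; lia.
- move=> k u v uv; case: (leqP k (size w')) => kw.
    by rewrite -cats1 takel_cat //; apply: h3.
  rewrite take_oversize; last by rewrite size_rcons.
  rewrite -cats1 !count_cat /= !h2 !nth_rem_corner //.
  have := part_nth_le pl uv; case: (eqVneq u i) => [->|ui]; case: (eqVneq v i) => [->|vi] /=;
    rewrite ?eqxx //= ?(eq_sym i) ?(negbTE ui) ?(negbTE vi) /=; lia.
Qed.

Lemma uniq_yam_words m l : is_part l -> sumn l = m -> uniq (yam_words m l).
Proof.
elim: m l => [|m IH] l pl sl //=; case: l pl sl => [//|a l'] pl sl.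
apply: allpairs_uniq_dep.
- exact/filter_uniq/iota_uniq.
- move=> i; rewrite mem_corners => ci; apply: IH; first exact: rem_corner_part.
  by rewrite sumn_rem_corner // sl.
- by move=> [i1 w1] [i2 w2] _ _ /= /rcons_inj [-> ->].
Qed.

Lemma cell_of_offset l i c : c < nth 0 l i -> cell_of l (sumn (take i l) + c) = (i, c).
Proof.
elim: l i => [|a l IH] [|i] //= h; first by rewrite h.
by rewrite -addnA ltnNge leq_addr /= addKn IH.
Qed.

Lemma cell_row_le l m : (cell_of l m).1 <= size l.
Proof. by elim: l m => [|a l IH] m //=; case: ifP => //= _; rewrite ltnS IH. Qed.

(* Entry [x] of the standard tableau encoded by [w] sits in row [w_x], after
   the earlier entries of that row. *)
Definition word_row (w : seq nat) (x : nat) : nat := nth 0 w x.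
Definition word_col (w : seq nat) (x : nat) : nat := count_mem (nth 0 w x) (take x w).
Definition word_slot (l w : seq nat) (x : nat) : nat :=
  sumn (take (word_row w x) l) + word_col w x.

Definition word_slot_ord n l w (x : 'I_n) : 'I_n := insubd x (word_slot l w x).

(* The [pick] avoids carrying an injectivity proof; it succeeds for every
   Yamanouchi word, see [word_permE]. *)
Definition word_perm n l w : 'S_n :=
  odflt 1%g [pick s : 'S_n | [forall x, s x == word_slot_ord l w x]].

Definition word_tabloid n (w : seq nat) : tabloid n := [ffun x : 'I_n => inord (nth 0 w x)].

Definition col_increasing n l (s : 'S_n) : Prop :=
  forall y z : 'I_n, y < z -> (cell_of l (s z)).2 = (cell_of l (s y)).2 ->
  (cell_of l (s y)).1 < (cell_of l (s z)).1.

Section YamanouchiTableau.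
Variables (n : nat) (l w : seq nat).
Hypotheses (sl : sumn l = n) (yw : yamanouchi n l w).

Lemma word_row_gt0 x : x < n -> 0 < nth 0 l (word_row w x).
Proof.
case: yw => s c _ xn; rewrite -c -has_count; apply/hasP; exists (nth 0 w x) => //=.
by apply: mem_nth; rewrite s.
Qed.

Lemma word_row_lt x : x < n -> word_row w x < size l.
Proof.
move=> /word_row_gt0; case: (ltnP (word_row w x) (size l)) => // h.
by rewrite nth_default.
Qed.

Lemma word_col_lt x : x < n -> word_col w x < nth 0 l (word_row w x).
Proof.
case: yw => s c _ xn; rewrite -c /word_col /word_row.
rewrite -[X in _ < count _ X](cat_take_drop x w) count_cat (drop_nth 0); last by rewrite s.
by rewrite /= eqxx; lia.
Qed.

Lemma word_slot_lt x : x < n -> word_slot l w x < n.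
Proof.
move=> xn; have rl := word_row_lt xn; have := word_col_lt xn.
have := sumn_cat (take (word_row w x).+1 l) (drop (word_row w x).+1 l).
by rewrite cat_take_drop (take_nth 0 rl) sumn_rcons sl /word_slot; lia.
Qed.

Lemma cell_word_slot x : x < n -> cell_of l (word_slot l w x) = (word_row w x, word_col w x).
Proof. by move=> xn; rewrite /word_slot cell_of_offset // word_col_lt. Qed.

Lemma word_col_incr y z : y < z -> z < n -> word_row w y = word_row w z ->
  word_col w y < word_col w z.
Proof.
case: yw => s _ _ yz zn e; rewrite /word_col -/(word_row w z) -e /word_row.
have := count_take_leq (pred1 (nth 0 w y)) w yz.
by rewrite (take_nth 0) ?s 1?(ltn_trans yz) // -cats1 count_cat /= eqxx addn1.
Qed.

Lemma word_slot_inj x y : x < n -> y < n -> word_slot l w x = word_slot l w y -> x = y.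
Proof.
move=> xn yn e; have := cell_word_slot xn; rewrite e cell_word_slot // => -[er ec].
case: (ltngtP x y) => // h.
  by have := word_col_incr h yn (esym er); rewrite ec ltnn.
by have := word_col_incr h xn er; rewrite ec ltnn.
Qed.

Lemma word_row_incr y z : y < z -> z < n -> word_col w z = word_col w y ->
  word_row w y < word_row w z.
Proof.
case: yw => s c latt yz zn e; rewrite ltnNge; apply/negP => zy.
have yn : y < n by lia.
have := count_take_leq (pred1 (word_row w z)) w (yz : y.+1 <= z).
have := latt y.+1 _ _ zy; rewrite (take_nth 0) ?s // -cats1 count_cat /= eqxx addn1.
by rewrite /word_col /word_row in e *; rewrite e => h1 /(leq_trans h1); rewrite ltnn.
Qed.

Lemma word_permE (x : 'I_n) : val (word_perm n l w x) = word_slot l w x.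
Proof.
have vs (y : 'I_n) : val (word_slot_ord l w y) = word_slot l w y.
  by rewrite val_insubd word_slot_lt.
have inj : injective (@word_slot_ord n l w).
  move=> y z /(congr1 val); rewrite !vs => e.
  exact/val_inj/(word_slot_inj (ltn_ord y) (ltn_ord z) e).
rewrite /word_perm; case: pickP => [s /forallP H|H] /=; first by rewrite (eqP (H x)) vs.
by have := H (perm inj); rewrite (_ : [forall x, _] = true) //; apply/forallP => y; rewrite permE.
Qed.

Lemma tab_of_word_perm : tab_of l (word_perm n l w) = word_tabloid n w.
Proof.
by apply/ffunP => x; rewrite !ffunE word_permE cell_word_slot.
Qed.

Lemma word_perm_col_increasing : col_increasing l (word_perm n l w).
Proof.
move=> y z yz; rewrite !word_permE !cell_word_slot //=.
exact: word_row_incr.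
Qed.

End YamanouchiTableau.

Lemma word_tabloid_inj n l w w' : size l <= n -> yamanouchi n l w -> yamanouchi n l w' ->
  word_tabloid n w = word_tabloid n w' -> w = w'.
Proof.
move=> ln yw yw' e; case: (yw) => s1 _ _; case: (yw') => s2 _ _.
apply: (@eq_from_nth _ 0); first by rewrite s1 s2.
move=> i; rewrite s1 => i_n.
have := congr1 (fun f : tabloid n => nat_of_ord (f (Ordinal i_n))) e; rewrite !ffunE /=.
have r1 := word_row_lt yw i_n; have r2 := word_row_lt yw' i_n.
by rewrite /word_row in r1 r2; rewrite !inordK //; lia.
Qed.

Definition tabloid_key n (r : tabloid n) : n.-tuplelexi nat := [tuple (r i : nat) | i < n].

Lemma tnth_tabloid_key n (r : tabloid n) i : tnth (tabloid_key r) i = r i.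
Proof. by rewrite tnth_mktuple. Qed.

Lemma tabloid_key_inj n : injective (@tabloid_key n).
Proof.
by move=> r r' e; apply/ffunP => x; apply: ord_inj; rewrite -!tnth_tabloid_key e.
Qed.

Lemma tab_of_val n l (s : 'S_n) x : size l <= n -> (tab_of l s x : nat) = (cell_of l (s x)).1.
Proof. by move=> ln; rewrite ffunE inordK // ltnS (leq_trans (cell_row_le _ _)). Qed.

(* Let [y] be the least point moved by [p^-1]. Both tabloids agree before [y];
   at [y] the second one records the row of the entry [p^-1 y] of [t_s], which
   is larger than [y] and in the same column, hence in a lower row. *)
Lemma tabloid_key_lt_colstab n l (s p : 'S_n) : size l <= n -> col_increasing l s ->
  colstab l s p -> p != 1%g ->
  (tabloid_key (tab_of l s) < tabloid_key (tab_of l (p^-1 * s)%g))%O.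
Proof.
move=> ln cs /forallP cp p1; set q := (p^-1)%g.
have [x0 qx0] : exists x0, q x0 != x0.
  apply/existsP; apply: contraNT p1 => /existsPn fix_q.
  have q1 : q = 1%g.
    by apply/permP => x; rewrite perm1; apply/eqP; move: (fix_q x); rewrite negbK.
  by rewrite -[p]invgK -/q q1 invg1.
case: (@arg_minnP _ x0 (fun x => q x != x) (@nat_of_ord n) qx0) => y qy ymin.
have qfix (x : 'I_n) : x < y -> q x = x.
  by move=> xy; apply/eqP; apply: contraTT xy => /ymin; rewrite -leqNgt.
have y_lt_qy : y < q y.
  rewrite ltn_neqAle (inj_eq val_inj) eq_sym qy leqNgt /=; apply/negP => qyy.
  by move: qy; rewrite -{2}(perm_inj (qfix _ qyy)) eqxx.
have col : (cell_of l (s (q y))).2 = (cell_of l (s y)).2.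
  by have := eqP (cp (q y)); rewrite /q permKV.
apply/ltxi_tuplePlt; exists y => [x xy|]; rewrite !tnth_tabloid_key.
  by rewrite !ffunE permM -/q qfix.
by rewrite !tab_of_val // permM -/q; apply: cs.
Qed.

Local Open Scope ring_scope.

Lemma polytabloid_entry n l (s : 'S_n) (r : tabloid n) :
  polytabloid l s 0 (enum_rank r) =
  \sum_(p : 'S_n | colstab l s p) (-1) ^+ odd_perm p * (r == tab_of l (p^-1 * s)%g)%:R.
Proof.
rewrite summxE; apply: eq_bigr => p _.
by rewrite mxE /tvec mxE eqxx /= (inj_eq enum_rank_inj) mulr_natr.
Qed.

Lemma polytabloid_entry_tab n l (s : 'S_n) : (size l <= n)%N -> col_increasing l s ->
  polytabloid l s 0 (enum_rank (tab_of l s)) = 1.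
Proof.
move=> ln cs; rewrite polytabloid_entry (bigD1 1%g) /=; last first.
  by apply/forallP => x; rewrite perm1.
rewrite odd_perm1 invg1 mul1g eqxx expr0 mul1r big1 ?addr0 // => p /andP [cp p1].
have := tabloid_key_lt_colstab ln cs cp p1; case: eqP => [<-|_]; last by rewrite mulr0.
by rewrite ltxx.
Qed.

Lemma polytabloid_entry_below n l (s : 'S_n) r : (size l <= n)%N -> col_increasing l s ->
  (tabloid_key r < tabloid_key (tab_of l s))%O -> polytabloid l s 0 (enum_rank r) = 0.
Proof.
move=> ln cs lr; rewrite polytabloid_entry big1 // => p cp.
case: eqP => [rE|_]; last by rewrite mulr0.
case: (eqVneq p 1%g) => [p1|p1]; first by move: lr; rewrite rE p1 invg1 mul1g ltxx.
by have := lt_trans lr (tabloid_key_lt_colstab ln cs cp p1); rewrite rE ltxx.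
Qed.

Definition standard_polytabloids n l : 'M[algC]_(size (yam_words n l), dimM n) :=
  \matrix_(k < size (yam_words n l)) polytabloid l (word_perm n l (nth [::] (yam_words n l) k)).

Section StandardPolytabloids.
Variables (n : nat) (l : seq nat).
Hypotheses (pl : is_part l) (sl : sumn l = n).

Let W := yam_words n l.
Let ln : (size l <= n)%N. Proof. by rewrite -sl part_size_le_sumn. Qed.
Let yW (k : 'I_(size W)) : yamanouchi n l (nth [::] W k).
Proof. exact/(yam_wordsP pl sl)/mem_nth. Qed.

Lemma standard_polytabloids_free : row_free (standard_polytabloids n l).
Proof.
apply: inj_row_free => u uM; apply/rowP => k; rewrite mxE; apply/eqP/negPn/negP => uk.
pose key (k : 'I_(size W)) := tabloid_key (word_tabloid n (nth [::] W k)).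
have key_inj : injective key.
  move=> k1 k2 /tabloid_key_inj /(word_tabloid_inj ln (yW k1) (yW k2)) e.
  by apply/val_inj/eqP; rewrite -(nth_uniq [::] (ltn_ord k1) (ltn_ord k2) (uniq_yam_words pl sl)) e.
case: (@arg_minP _ _ _ k (fun k => u 0 k != 0) key uk) => k0 uk0 k0min.
have : (u *m standard_polytabloids n l) 0 (enum_rank (word_tabloid n (nth [::] W k0))) = 0.
  by rewrite uM mxE.
rewrite mxE (bigD1 k0) //= big1 ?addr0 => [|k' k'k0].
  rewrite mxE -(tab_of_word_perm sl (yW k0)) polytabloid_entry_tab ?mulr1 //.
    by move/eqP; rewrite (negbTE uk0).
  exact: word_perm_col_increasing.
case: (eqVneq (u 0 k') 0) => [->|uk']; first by rewrite mul0r.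
rewrite mxE polytabloid_entry_below ?mulr0 //; first exact: word_perm_col_increasing.
rewrite (tab_of_word_perm sl (yW k')) lt_neqAle k0min // andbT.
by apply: contra k'k0 => /eqP /key_inj ->.
Qed.

Lemma nsyt_le_rank_specht : (nsyt l <= \rank (specht_span n l))%N.
Proof.
rewrite /nsyt sl -size_yam_words -(eqP standard_polytabloids_free).
apply/mxrankS/row_subP => k; rewrite rowK.
have -> : polytabloid l (word_perm n l (nth [::] W k)) =
    row (enum_rank (word_perm n l (nth [::] W k))) (specht_span n l).
  by rewrite rowK enum_rankK.
exact: row_sub.
Qed.

End StandardPolytabloids.

Lemma specht_char1 n l : specht_char l (1%g : 'S_n) = (\rank (specht_span n l))%:R.
Proof.
have tperm_mx1 : Defs.tperm_mx (1%g : 'S_n) = 1%:M.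
  apply/matrixP => i j; rewrite !mxE.
  have -> : tact 1%g (enum_val i) = enum_val i by apply/ffunP => y; rewrite ffunE invg1 perm1.
  by rewrite (inj_eq enum_val_inj) eq_sym.
rewrite /specht_char tperm_mx1 mulmx1.
have -> : row_base (specht_span n l) *m pinvmx (row_base (specht_span n l)) = 1%:M.
  apply: (row_free_inj (row_base_free (specht_span n l))).
  by rewrite mulmxKpV ?submx_refl // mul1mx.
by rewrite mxtrace1.
Qed.

Unset Implicit Arguments. Set Strict Implicit.

Theorem lemma3p2 (n : nat) (hn : (27 <= n)%N) (phi : 'CF([set: 'S_n]))
    (l : seq nat) :
  phi \is a character ->
  phi 1%g < (5 * 'C(n, 3))%:R ->
  is_partition n l ->
  (exists2 i : Iirr [set: 'S_n],
      i \in irr_constt phi & forall g : 'S_n, 'chi_i g = specht_char l g) ->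
  l \in lemma3p2_list n.
Proof.
move=> phiC phi1 /and3P [srt no0 /eqP sl] [i iC chiE].
have pl : is_part l by apply/andP.
have := le_lt_trans (char1_ge_constt phiC iC) phi1.
rewrite chiE specht_char1 ltr_nat => rank_lt.
apply/negPn/negP => /(nsyt_ge_5bin3 hn pl sl) nsyt_ge.
have := nsyt_le_rank_specht pl sl; lia.
Qed.
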